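(* Let $\mathcal{G}$ be the set of $\mathbf{r}=(r_{12},r_{13},r_{14},r_{23},r_{24},r_{34})\in[0,\infty)^6$ with $H(\mathbf{r})\ge 0$ and $r_{ij}+r_{jk}>r_{ik}$ for all pairwise distinct $i,j,k$ (with $r_{ji}=r_{ij}$), and let $\mathcal{P}=\{\mathbf{r}\in\mathcal{G}:P(\mathbf{r})=0\}$, where $P(\mathbf{r})=r_{12}r_{34}+r_{14}r_{23}-r_{13}r_{24}$. If $\mathbf{r}\in\mathcal{P}$ then $H(\mathbf{r})=0$. Moreover $\mathcal{D}=\mathcal{M}^+\cap\mathcal{G}$, where $\mathcal{M}^+=\{\mathbf{r}\in[0,\infty)^6: I(\mathbf{r})=1,\ P(\mathbf{r})=0\}$ and $\mathcal{D}=\{\mathbf{r}\in\mathcal{G}: I(\mathbf{r})=1,\ P(\mathbf{r})=0,\ H(\mathbf{r})=0\}$.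
   Context: $H(\mathbf{r})$ is the Cayley–Menger determinant $H(\mathbf{r})=\det\begin{pmatrix}0&1&1&1&1\\1&0&r_{12}^2&r_{13}^2&r_{14}^2\\1&r_{12}^2&0&r_{23}^2&r_{24}^2\\1&r_{13}^2&r_{23}^2&0&r_{34}^2\\1&r_{14}^2&r_{24}^2&r_{34}^2&0\end{pmatrix}$ (equal to $288V^2$, $V$ the volume of the tetrahedron with these edge lengths). With masses $m_1,\dots,m_4>0$ and $M=\sum m_i$, $I(\mathbf{r})=\frac{1}{2M}\sum_{i<j}m_im_jr_{ij}^2$. *)

From HB Require Import structures.
From mathcomp Require Import all_boot all_order all_algebra.
From mathcomp Require Import reals.
Set Implicit Arguments. Unset Strict Implicit. Unset Printing Implicit Defensive.
Import Order.TTheory GRing.Theory Num.Theory.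
Local Open Scope ring_scope.

Section Tetra.
Variable R : realType.

(* A configuration r = (r12,r13,r14,r23,r24,r34) is a row vector of size 6:
   r 0 = r12, r 1 = r13, r 2 = r14, r 3 = r23, r 4 = r24, r 5 = r34.
   Bodies 1..4 are indexed by 'I_4 as 0..3. *)
Definition eidx (i j : nat) : nat :=
  match i, j with
  | 0, 1 | 1, 0 => 0
  | 0, 2 | 2, 0 => 1
  | 0, 3 | 3, 0 => 2
  | 1, 2 | 2, 1 => 3
  | 1, 3 | 3, 1 => 4
  | 2, 3 | 3, 2 => 5
  | _, _ => 0
  end.

Definition rr (r : 'rV[R]_6) (i j : 'I_4) : R :=
  if i == j then 0 else r ord0 (inord (eidx i j)).

Definition CM (r : 'rV[R]_6) : 'M[R]_5 :=
  \matrix_(a < 5, b < 5)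
    if a == b then 0
    else if (a == 0%N :> nat) || (b == 0%N :> nat) then 1
    else (rr r (inord a.-1) (inord b.-1)) ^+ 2.

Definition H (r : 'rV[R]_6) : R := \det (CM r).

Definition Mtot (m : 'I_4 -> R) : R := \sum_(i < 4) m i.

Definition I (m : 'I_4 -> R) (r : 'rV[R]_6) : R :=
  (2 * Mtot m)^-1 * \sum_(i < 4) \sum_(j < 4 | (i < j)%N) m i * m j * (rr r i j) ^+ 2.

Definition P (r : 'rV[R]_6) : R :=
  r ord0 (inord 0) * r ord0 (inord 5) + r ord0 (inord 2) * r ord0 (inord 3)
  - r ord0 (inord 1) * r ord0 (inord 4).

Definition nonneg6 (r : 'rV[R]_6) : Prop := forall k : 'I_6, 0 <= r ord0 k.

Definition inG (r : 'rV[R]_6) : Prop :=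
  nonneg6 r /\ 0 <= H r /\
  (forall i j k : 'I_4, i != j -> j != k -> i != k -> rr r i k < rr r i j + rr r j k).

Definition inP (r : 'rV[R]_6) : Prop := inG r /\ P r = 0.

Definition inMplus (m : 'I_4 -> R) (r : 'rV[R]_6) : Prop :=
  nonneg6 r /\ I m r = 1 /\ P r = 0.

Definition inD (m : 'I_4 -> R) (r : 'rV[R]_6) : Prop :=
  inG r /\ I m r = 1 /\ P r = 0 /\ H r = 0.

End Tetra.

From HB Require Import structures.
From mathcomp Require Import all_boot all_order all_algebra.
From mathcomp Require Import reals.
From mathcomp Require Import ring lra.
Import Order.TTheory GRing.Theory Num.Theory.
Local Open Scope ring_scope.

(** Expanding the Cayley–Menger determinant gives H(r) = 288 V^2 as an
    explicit polynomial in the squared edge lengths.  Solving Ptolemy's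
    relation r13 r24 = r12 r34 + r14 r23 for r13 (the strict triangle
    inequalities force r24 > 0) turns r24^2 H(r) into -2 Q^2 for a polynomial
    Q, so H(r) <= 0; together with H(r) >= 0 this gives H(r) = 0.  The
    description of D is then immediate. *)

(* [bump] in a form that [simpl] evaluates on numerals. *)
Definition skip_at (j k : nat) : nat := if Nat.leb j k then k.+1 else k.

Lemma bump_skip_at j k : bump j k = skip_at j k.
Proof.
by rewrite /bump /skip_at; case: PeanoNat.Nat.leb_spec => /ssrnat.leP; case: leqP.
Qed.

Section CayleyMengerDeterminant.
Context {R : comPzRingType}.

Definition mx_of_nat n (f : nat -> nat -> R) : 'M[R]_n := \matrix_(i < n, k < n) f i k.

Lemma det_mx_of_nat_expand n (f : nat -> nat -> R) :
  \det (mx_of_nat n.+1 f) =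
  \sum_(0 <= j < n.+1)
     f 0%N j * (-1) ^+ j * \det (mx_of_nat n (fun i k => f i.+1 (skip_at j k))).
Proof.
rewrite big_mkord (expand_det_row _ ord0); apply: eq_bigr => j _.
rewrite mxE /cofactor add0n -mulrA; congr (_ * (_ * _)).
by congr (\det _); apply/matrixP => i k; rewrite !mxE /= !bump_skip_at.
Qed.

(* Arguments are the squared lengths of the edges 12, 13, 14, 23, 24, 34. *)
Definition cayley_menger_mx (a b c d e f : R) : 'M[R]_5 :=
  mx_of_nat 5 (fun i k => (nth [::] [:: [:: 0; 1; 1; 1; 1]; [:: 1; 0; a; b; c];
      [:: 1; a; 0; d; e]; [:: 1; b; d; 0; f]; [:: 1; c; e; f; 0]] i)`_k).

Definition cayley_menger (a b c d e f : R) : R :=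
  2 * (a * f * (b + c + d + e - a - f) + b * e * (a + c + d + f - b - e)
       + c * d * (a + b + e + f - c - d)
       - a * b * d - a * c * e - b * c * f - d * e * f).

Lemma det_cayley_menger_mx (a b c d e f : R) :
  \det (cayley_menger_mx a b c d e f) = cayley_menger a b c d e f.
Proof.
rewrite /cayley_menger_mx.
do 5 rewrite !det_mx_of_nat_expand /= !big_cons !big_nil /skip_at /= ?mul0r ?add0r.
by rewrite !det_mx00 /cayley_menger; ring.
Qed.

End CayleyMengerDeterminant.

Lemma cayley_menger_ptolemy {F : fieldType} (a b c d e f : F) :
  e != 0 -> b * e = a * f + c * d ->
  e ^+ 2 * cayley_menger (a ^+ 2) (b ^+ 2) (c ^+ 2) (d ^+ 2) (e ^+ 2) (f ^+ 2) =
  - 2 * (d * f * (a ^+ 2 + c ^+ 2 - e ^+ 2) + a * c * (d ^+ 2 + f ^+ 2 - e ^+ 2)) ^+ 2.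
Proof.
move=> e_neq0 ptolemy.
have -> : b = (a * f + c * d) / e by rewrite -ptolemy mulfK.
by rewrite /cayley_menger; field.
Qed.

Section Tetrahedron.
Variable R : realType.
Implicit Types r : 'rV[R]_6.

Lemma rrE r i j : (i < 4)%N -> (j < 4)%N ->
  rr r (inord i) (inord j) = if i == j then 0 else r ord0 (inord (eidx i j)).
Proof.
move=> i_lt4 j_lt4; rewrite /rr.
have -> : (inord i == inord j :> 'I_4) = (i == j) by rewrite -val_eqE /= !inordK.
by rewrite !inordK.
Qed.

Lemma CM_cayley_menger_mx r :
  CM r = cayley_menger_mx (r ord0 (inord 0) ^+ 2) (r ord0 (inord 1) ^+ 2)
           (r ord0 (inord 2) ^+ 2) (r ord0 (inord 3) ^+ 2)
           (r ord0 (inord 4) ^+ 2) (r ord0 (inord 5) ^+ 2).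
Proof.
apply/matrixP => -[[|[|[|[|[|i]]]]] lt_i] [[|[|[|[|[|k]]]]] lt_k] //;
  by rewrite !mxE /= ?rrE.
Qed.

Lemma H_cayley_menger r :
  H r = cayley_menger (r ord0 (inord 0) ^+ 2) (r ord0 (inord 1) ^+ 2)
          (r ord0 (inord 2) ^+ 2) (r ord0 (inord 3) ^+ 2)
          (r ord0 (inord 4) ^+ 2) (r ord0 (inord 5) ^+ 2).
Proof. by rewrite /H CM_cayley_menger_mx det_cayley_menger_mx. Qed.

Lemma ptolemy_H_le0 r : 0 < r ord0 (inord 4) -> P r = 0 -> H r <= 0.
Proof.
move=> r24_gt0 /eqP; rewrite /P subr_eq0 => /eqP ptolemy.
have r24_sq_gt0 : 0 < r ord0 (inord 4) ^+ 2 by rewrite exprn_gt0.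
rewrite -(pmulr_rle0 _ r24_sq_gt0) H_cayley_menger.
rewrite cayley_menger_ptolemy ?lt0r_neq0 -?ptolemy //.
by rewrite mulNr oppr_le0 mulr_ge0 ?sqr_ge0.
Qed.

Lemma inG_r24_gt0 r : inG r -> 0 < r ord0 (inord 4).
Proof.
case=> _ [_ triangle].
have := triangle (inord 0) (inord 1) (inord 3).
have := triangle (inord 0) (inord 3) (inord 1).
rewrite -!val_eqE /= !inordK // !rrE //= => /(_ isT isT isT) ? /(_ isT isT isT) ?.
lra.
Qed.

Lemma inP_H_eq0 r : inP r -> H r = 0.
Proof.
move=> [rG P_eq0]; have [_ [H_ge0 _]] := rG.
by apply/eqP; rewrite eq_le H_ge0 ptolemy_H_le0 ?inG_r24_gt0.
Qed.

End Tetrahedron.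

Theorem lemma1 (R : realType) (m : 'I_4 -> R) (hm : forall i, 0 < m i) :
  (forall r : 'rV[R]_6, inP r -> H r = 0) /\
  (forall r : 'rV[R]_6, inD m r <-> (inMplus m r /\ inG r)).
Proof.
split=> [|r]; first exact: inP_H_eq0.
split=> [[rG [I_eq1 [P_eq0 _]]] | [[_ [I_eq1 P_eq0]] rG]].
- by split=> //; split=> //; case: rG.
- by split=> //; split=> //; split=> //; apply: inP_H_eq0.
Qed.
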